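(* If $\mathcal G$ is a projective Fraïssé family of connected finite graphs with confluent epimorphisms, then its projective Fraïssé limit is Kelley.
   Context: A graph is a pair $(V,E)$ with $E\subseteq V^2$ reflexive and symmetric; an epimorphism is a vertex map sending edges to edges and surjective on vertices and edges. A topological graph has a compact, zero-dimensional, second-countable (metrizable) vertex set and a closed edge set. A vertex set $S$ is disconnected if $S=P\cup Q$ with $P,Q$ nonempty disjoint closed and no edge between; otherwise connected; components are maximal connected subsets. An epimorphism $f$ is confluent if for each closed connected $Q$ in the target every component $K$ of $f^{-1}(Q)$ satisfies $f(K)=Q$. A topological graph $X$ with a compatible metric is Kelley if $X$ is connected and for every closed connected $K\subseteq X$, every vertex $p\in K$ and every sequence of vertices $p_n\to p$ there are closed connected sets $K_n$ with $p_n\in K_n$ and $K_n\to K$ in the Hausdorff metric. A projective Fraïssé family is a class of finite graphs with a fixed class of epimorphisms, countably many isomorphism types, closed under composition with identities, with the joint projection property and amalgamation property ($f\colon B\to A$, $g\colon C\to A$ fixed give $D$ and fixed $f_0,g_0$ with $f\circ f_0=g\circ g_0$). Its projective Fraïssé limit is the unique topological graph $\mathbb F=\varprojlim\{F_n,\alpha_n\}$ (members of the family, fixed bonding maps, edges coordinatewise) such that every member is an image of $\mathbb F$ under an admissible epimorphism and for admissible $f\colon\mathbb F\to A$ and fixed $g\colon B\to A$ there is admissible $h$ with $f=g\circ h$, admissible meaning $h'\circ\alpha^\infty_m$ with $h'$ fixed. *)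

From mathcomp Require Import all_boot.
Set Implicit Arguments. Unset Strict Implicit. Unset Printing Implicit Defensive.

Record finite_graph := FGraph {
  fg_carrier :> finType;
  fg_edge : rel fg_carrier;
  fg_refl : reflexive fg_edge;
  fg_sym : symmetric fg_edge }.

Definition epimorphism (A B : finite_graph) (f : A -> B) : Prop :=
  (forall a a', fg_edge a a' -> fg_edge (f a) (f a')) /\
  (forall b : B, exists a : A, f a = b) /\
  (forall b b' : B, fg_edge b b' ->
     exists a a' : A, [/\ fg_edge a a', f a = b & f a' = b']).

(** Connectedness of a vertex subset of a finite (discrete) graph: every
    subset is closed, so S is disconnected iff it splits into two nonempty
    disjoint parts with no edge between them. *)
Definition fdisconnected (A : finite_graph) (S : {set A}) : Prop :=
  exists P Q : {set A}, [/\ P :|: Q = S, P != set0, Q != set0,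
    [disjoint P & Q] &
    forall x y, x \in P -> y \in Q -> ~~ fg_edge x y].

Definition fconnected (A : finite_graph) (S : {set A}) : Prop := ~ fdisconnected S.

Definition fcomponent (A : finite_graph) (S K : {set A}) : Prop :=
  [/\ K \subset S, fconnected K &
      forall K' : {set A}, K \subset K' -> K' \subset S -> fconnected K' -> K' = K].

Definition confluent (A B : finite_graph) (f : A -> B) : Prop :=
  epimorphism f /\
  forall Q : {set B}, fconnected Q ->
    forall K : {set A}, fcomponent (f @^-1: Q) K -> f @: K = Q.

Definition fgraph_iso (A B : finite_graph) : Prop :=
  exists f : A -> B, bijective f /\ forall a a', fg_edge (f a) (f a') = fg_edge a a'.

(** * Projective Fraïssé families.
    [G] is the class of graphs, [Fix A B f] says that [f : A -> B] is one of
    the fixed epimorphisms (only meaningful for members of [G]). *)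
Definition proj_fraisse_family (G : finite_graph -> Prop)
    (Fix : forall A B : finite_graph, (A -> B) -> Prop) : Prop :=
  (forall (A B : finite_graph) (f : A -> B), G A -> G B -> Fix A B f -> epimorphism f) /\
  (exists H : nat -> finite_graph, forall A : finite_graph, G A -> exists k, fgraph_iso A (H k)) /\
  (forall A : finite_graph, G A -> Fix A A id) /\
  (forall (A B C : finite_graph) (f : A -> B) (g : B -> C), G A -> G B -> G C ->
     Fix A B f -> Fix B C g -> Fix A C (g \o f)) /\
  (forall A B : finite_graph, G A -> G B ->
     exists (C : finite_graph) (f : C -> A) (g : C -> B), [/\ G C, Fix C A f & Fix C B g]) /\
  (forall (A B C : finite_graph) (f : B -> A) (g : C -> A), G A -> G B -> G C ->
     Fix B A f -> Fix C A g ->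
     exists (D : finite_graph) (f0 : D -> B) (g0 : D -> C),
       [/\ G D, Fix D B f0, Fix D C g0 & forall d, f (f0 d) = g (g0 d)]).

Section InvLim.
Variables (F : nat -> finite_graph) (alpha : forall n, F n.+1 -> F n).

Definition invlim : Type :=
  {x : forall n, F n | forall n, alpha (x n.+1) = x n}.

Definition il_edge (x y : invlim) : Prop :=
  forall n, fg_edge (proj1_sig x n) (proj1_sig y n).

(** [near m x y] iff d(x,y) < 2^-m for the compatible ultrametric
    d(x,y) = 2^-(least k with x_k <> y_k). *)
Definition near (m : nat) (x y : invlim) : Prop :=
  forall k, k <= m -> proj1_sig x k = proj1_sig y k.

Definition closure (P : invlim -> Prop) (x : invlim) : Prop :=
  forall m, exists y, P y /\ near m x y.

Definition closed (P : invlim -> Prop) : Prop :=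
  forall x, closure P x -> P x.

Definition rel_closed (S P : invlim -> Prop) : Prop :=
  forall x, S x -> closure P x -> P x.

Definition disconnected (S : invlim -> Prop) : Prop :=
  exists P Q : invlim -> Prop,
    (forall x, S x <-> P x \/ Q x) /\
    (exists x, P x) /\ (exists x, Q x) /\
    (forall x, ~ (P x /\ Q x)) /\
    rel_closed S P /\ rel_closed S Q /\
    (forall x y, P x -> Q y -> ~ il_edge x y).

Definition connected (S : invlim -> Prop) : Prop := ~ disconnected S.

Definition seq_converges (ps : nat -> invlim) (p : invlim) : Prop :=
  forall m, exists N, forall n, N <= n -> near m (ps n) p.

Definition hausdorff_converges (Ks : nat -> invlim -> Prop) (K : invlim -> Prop)
  : Prop :=
  forall m, exists N, forall n, N <= n ->
    (forall x, Ks n x -> exists y, K y /\ near m x y) /\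
    (forall y, K y -> exists x, Ks n x /\ near m x y).

Definition kelley : Prop :=
  connected (fun _ => True) /\
  forall (K : invlim -> Prop) (p : invlim) (ps : nat -> invlim),
    closed K -> connected K -> K p -> seq_converges ps p ->
    exists Ks : nat -> invlim -> Prop,
      (forall n, closed (Ks n)) /\ (forall n, connected (Ks n)) /\
      (forall n, Ks n (ps n)) /\ hausdorff_converges Ks K.

Definition admissible (Fix : forall A B : finite_graph, (A -> B) -> Prop)
    (A : finite_graph) (h : invlim -> A) : Prop :=
  exists m (h' : F m -> A), Fix (F m) A h' /\
    forall x, h x = h' (proj1_sig x m).

Definition is_proj_fraisse_limit (G : finite_graph -> Prop)
    (Fix : forall A B : finite_graph, (A -> B) -> Prop) : Prop :=
  (forall n, G (F n)) /\
  (forall n, Fix (F n.+1) (F n) (@alpha n)) /\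
  (forall A : finite_graph, G A -> exists h : invlim -> A, admissible Fix h /\
       (forall a : A, exists x, h x = a) /\
       (forall a a' : A, fg_edge a a' ->
          exists x y, il_edge x y /\ h x = a /\ h y = a')) /\
  (forall (A B : finite_graph) (f : invlim -> A) (g : B -> A), G A -> G B ->
     admissible Fix f -> Fix B A g ->
     exists h : invlim -> B, admissible Fix h /\ forall x, f x = g (h x)).

End InvLim.

(* Write K_k for the projection of K into the k-th graph F_k. When p_n agrees with
   p on the coordinates below L_n, let D^n_k = K_k for k < L_n and, for k >= L_n,
   let D^n_k be the component of alpha_k^-1(D^n_(k-1)) containing the k-th
   coordinate of p_n. Confluence makes alpha_k map D^n_(k+1) onto D^n_k, so the
   threads through (D^n_k)_k form a closed set K_n containing p_n; it is connected
   because every D^n_k is, as König's lemma pushes a separation of K_n down to some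
   finite level. Since L_n -> oo and K_n has the same projections as K below L_n,
   K_n -> K in the Hausdorff metric. *)
From Pilot Require Import Defs.
From mathcomp Require Import all_boot boolp.
Set Implicit Arguments. Unset Strict Implicit. Unset Printing Implicit Defensive.

Section Koenig.
Variables (X : nat -> finType) (beta : forall k, X k.+1 -> X k) (S : forall k, {set X k}).
Hypothesis S_neq0 : forall k, S k != set0.
Hypothesis beta_S : forall k b, b \in S k.+1 -> beta b \in S k.

Fixpoint extendable j k : {set X k} :=
  if j is j'.+1 then S k :&: (@beta k) @: extendable j' k.+1 else S k.

Lemma extendable_sub j k : extendable j k \subset S k.
Proof. by case: j => [|j] /=; [exact: subxx | exact: subsetIl]. Qed.

Lemma extendableS j k : extendable j.+1 k \subset extendable j k.
Proof.
elim: j k => [|j IH] k /=; first exact: subsetIl.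
by apply: setIS; apply: imsetS; exact: IH.
Qed.

Lemma sub_extendable k j j' : j <= j' -> extendable j' k \subset extendable j k.
Proof.
move/subnK <-; elim: (j' - j) => [|d IH]; first by rewrite add0n.
exact: subset_trans (extendableS _ _) IH.
Qed.

Lemma extendable_neq0 j k : extendable j k != set0.
Proof.
elim: j k => [|j IH] k /=; first exact: S_neq0.
have /set0Pn [b ext_b] := IH k.+1.
apply/set0Pn; exists (beta b); rewrite inE imset_f ?andbT //.
by apply: beta_S; exact: (subsetP (extendable_sub j k.+1)).
Qed.

(* The decreasing sets [extendable j k] stabilise at an index of minimal cardinality. *)
Lemma extendable_stable k : exists j0, forall j, extendable j0 k \subset extendable j k.
Proof.
have card_attained : exists c, `[< exists j, #|extendable j k| = c >].
  by exists #|extendable 0 k|; apply/asboolP; exists 0.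
case: (ex_minnP card_attained) => _ /asboolP [j0 <-] min_card.
exists j0 => j; have sub_max := sub_extendable k (leq_maxl j0 j).
have : #|extendable j0 k| <= #|extendable (maxn j0 j) k|.
  by apply: min_card; apply/asboolP; exists (maxn j0 j).
rewrite (geq_leqif (subset_leqif_card sub_max)) => sub_j0.
exact: subset_trans sub_j0 (sub_extendable k (leq_maxr j0 j)).
Qed.

Definition extendable_all k := [set b | `[< forall j, b \in extendable j k >]].

Lemma extendable_all_neq0 k : exists b, b \in extendable_all k.
Proof.
have [j0 stable] := extendable_stable k.
have /set0Pn [b ext_b] := extendable_neq0 j0 k.
by exists b; rewrite inE; apply/asboolP => j; exact: (subsetP (stable j)).
Qed.

Lemma extendable_all_lift k b :
  b \in extendable_all k -> exists c, (c \in extendable_all k.+1) && (beta c == b).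
Proof.
rewrite inE => /asboolP ext_b; have [j0 stable] := extendable_stable k.+1.
have /setIP [_ /imsetP [c ext_c ->]] := ext_b j0.+1.
by exists c; rewrite eqxx andbT inE; apply/asboolP => j; exact: (subsetP (stable j)).
Qed.

Definition lift_step k (u : {b | b \in extendable_all k}) : {c | c \in extendable_all k.+1} :=
  let ex := extendable_all_lift (svalP u) in
  exist _ (xchoose ex) (proj1 (andP (xchooseP ex))).

Fixpoint extendable_thread k : {b | b \in extendable_all k} :=
  if k is k'.+1 then lift_step (extendable_thread k')
  else let ex := extendable_all_neq0 0 in exist _ (xchoose ex) (xchooseP ex).

Lemma koenig : exists x : forall k, X k,
  (forall k, beta (x k.+1) = x k) /\ (forall k, x k \in S k).
Proof.
exists (fun k => sval (extendable_thread k)); split => k.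
  by case/andP: (xchooseP (extendable_all_lift (svalP (extendable_thread k)))) => _ /eqP.
have := svalP (extendable_thread k); rewrite inE => /asboolP ext_k.
exact: (subsetP (extendable_sub 0 k)) _ (ext_k 0).
Qed.
End Koenig.

Section Components.
Variable A : finite_graph.

Lemma fconnected_set1 (b : A) : fconnected [set b].
Proof.
move=> [P [Q [PQ_b /set0Pn [x Px] /set0Pn [y Qy] disPQ _]]].
have : x \in [set b] by rewrite -PQ_b inE Px.
have : y \in [set b] by rewrite -PQ_b inE Qy orbT.
rewrite !inE => /eqP def_y /eqP def_x; rewrite def_x -def_y in Px.
by rewrite (disjointFr disPQ Px) in Qy.
Qed.

(* A connected subset of [S] of maximal size containing [b] is a component. *)
Lemma fcomponent_exists (S : {set A}) b : b \in S -> exists2 C, fcomponent S C & b \in C.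
Proof.
move=> Sb; pose P (C : {set A}) := [&& b \in C, C \subset S & `[< fconnected C >]].
have P_b : P [set b] by rewrite /P set11 sub1set Sb; apply/asboolP; exact: fconnected_set1.
case: (arg_maxnP (fun C : {set A} => #|C|) P_b) => C /and3P [Cb CS /asboolP connC] maxC.
exists C => //; split => // C' CC' C'S connC'.
apply/esym/eqP; rewrite eqEcard CC' /=; apply: maxC.
by rewrite /P C'S (subsetP CC' _ Cb); apply/asboolP.
Qed.

Definition component_of (S : {set A}) (b : A) : {set A} :=
  odflt set0 [pick C | `[< fcomponent S C >] && (b \in C)].

Lemma component_ofP (S : {set A}) b :
  b \in S -> fcomponent S (component_of S b) /\ b \in component_of S b.
Proof.
move=> Sb; rewrite /component_of; case: pickP => [C /andP [/asboolP compC Cb] //|none].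
have [C compC Cb] := fcomponent_exists Sb.
by have := none C; rewrite Cb andbT (asboolT compC).
Qed.
End Components.

Section InverseLimit.
Variables (F : nat -> finite_graph) (alpha : forall n, F n.+1 -> F n).
Notation IL := (invlim alpha).
Notation pr x k := (proj1_sig x k).
Notation tagF b := (Tagged (fun i => fg_carrier (F i)) b).

Lemma near_of_eq M (x y : IL) : pr x M = pr y M -> near M x y.
Proof.
elim: M => [|M IH] eqM k; first by rewrite leqn0 => /eqP ->.
rewrite leq_eqVlt => /orP [/eqP -> //|]; apply: IH.
by rewrite -(proj2_sig x M) -(proj2_sig y M) eqM.
Qed.

Definition onto_chain (D : forall k, {set F k}) : Prop :=
  forall k, (@alpha k) @: D k.+1 = D k.

Definition threads (D : forall k, {set F k}) (x : IL) : Prop := forall k, pr x k \in D k.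

Lemma closed_threads D : Defs.closed (threads D).
Proof. by move=> x cl_x k; have [y [Dy /(_ k (leqnn k)) ->]] := cl_x k. Qed.

Section Lift.
Variables (D : forall k, {set F k}) (k : nat) (a : F k).
Hypotheses (ontoD : onto_chain D) (Da : a \in D k).

(* For [k <= j], [lies_over b] says that [b : F j] projects to [a]; for [j < k] it
   always holds. Tagging compares points of [F j] and [F k] without a cast. *)
Fixpoint lies_over j : F j -> bool :=
  match j with
  | 0 => fun b => (0 < k) || (tagF b == tagF a)
  | j'.+1 => fun b =>
      if k <= j' then lies_over (alpha b) else (j'.+1 < k) || (tagF b == tagF a)
  end.

Lemma lies_over_lt j (b : F j) : j < k -> lies_over b.
Proof. by case: j b => [|j] b /= lt_jk; rewrite ?lt_jk // leqNgt (ltnW lt_jk). Qed.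

Lemma lies_over_at (b : F k) : lies_over b = (b == a).
Proof.
suff tagE j (c : F j) : j = k -> lies_over c = (tagF c == tagF a) by rewrite tagE // eq_Tagged.
case: j c => [|j] c /= e; first by rewrite (_ : 0 < k = false) // -e.
have -> : (k <= j) = false by rewrite -e ltnn.
by have -> : (j.+1 < k) = false by rewrite -e ltnn.
Qed.

Lemma lies_over_alpha j (b : F j.+1) : lies_over b -> lies_over (alpha b).
Proof. by rewrite /=; case: (leqP k j) => // lt_jk _; exact: lies_over_lt. Qed.

Lemma onto_chain_neq0 j : j <= k -> D j != set0.
Proof.
suff below d j' : j' + d = k -> D j' != set0 by move/subnKC; exact: below.
elim: d j' => [|d IH] j'; first by rewrite addn0 => ->; apply/set0Pn; exists a.
rewrite -addSnnS => /IH /set0Pn [b Db].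
by apply/set0Pn; exists (alpha b); rewrite -ontoD imset_f.
Qed.

Lemma lift_set_neq0 j : [set b in D j | lies_over b] != set0.
Proof.
have low i : i <= k -> [set b in D i | lies_over b] != set0.
  rewrite leq_eqVlt => /orP [/eqP ->|lt_ik].
    by apply/set0Pn; exists a; rewrite inE Da lies_over_at eqxx.
  have /set0Pn [b Db] := onto_chain_neq0 (ltnW lt_ik).
  by apply/set0Pn; exists b; rewrite inE Db lies_over_lt.
elim: j => [|j IH]; first exact: low.
case: (leqP j.+1 k) => [|lt_kj]; first exact: low.
have /set0Pn [b /setIdP [Db over_b]] := IH.
move: Db; rewrite -ontoD => /imsetP [c Dc def_b].
by apply/set0Pn; exists c; rewrite inE Dc /= (lt_kj : k <= j) -def_b.
Qed.

Lemma thread_through : exists x : IL, threads D x /\ pr x k = a.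
Proof.
have lift_alpha j (b : F j.+1) :
    b \in [set b in D j.+1 | lies_over b] -> alpha b \in [set b in D j | lies_over b].
  by case/setIdP => Db /lies_over_alpha over_ab; rewrite inE -ontoD imset_f.
have [x [x_thread x_in]] := koenig lift_set_neq0 lift_alpha.
exists (exist _ x x_thread); split => [j|]; first by case/setIdP: (x_in j).
by apply/eqP; rewrite -lies_over_at; case/setIdP: (x_in k).
Qed.
End Lift.

(* Locked, so that [inE] does not unfold membership in [img P k]. *)
Fact img_key : unit. Proof. exact: tt. Qed.
Definition img (P : IL -> Prop) k : {set F k} :=
  locked_with img_key [set a : F k | `[< exists x, P x /\ pr x k = a >]].

Lemma imgP (P : IL -> Prop) k a : reflect (exists x, P x /\ pr x k = a) (a \in img P k).
Proof. rewrite /img locked_withE inE; exact: asboolP. Qed.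

Lemma img_in (P : IL -> Prop) k x : P x -> pr x k \in img P k.
Proof. by move=> Px; apply/imgP; exists x. Qed.

Lemma onto_chain_img P : onto_chain (img P).
Proof.
move=> k; apply/setP => a; apply/imsetP/imgP => [[_ /imgP [x [Px <-]] ->]|[x [Px <-]]].
  by exists x; rewrite (proj2_sig x k).
by exists (pr x k.+1); [exact: img_in | rewrite (proj2_sig x k)].
Qed.

Lemma img_sub (P : IL -> Prop) D k : (forall x, P x -> threads D x) -> img P k \subset D k.
Proof. by move=> PD; apply/subsetP => _ /imgP [x [/PD Dx <-]]. Qed.

Lemma closure_img (P : IL -> Prop) x : (forall k, pr x k \in img P k) -> Defs.closure P x.
Proof.
move=> x_img m; have /imgP [y [Py eq_m]] := x_img m.
by exists y; split; last exact: near_of_eq.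
Qed.

Lemma connected_img (K : IL -> Prop) k : connected K -> fconnected (img K k).
Proof.
move=> connK [P' [Q' [imgE P'_neq0 Q'_neq0 disPQ' noedge]]]; apply: connK.
have img_split x : K x -> pr x k \in P' \/ pr x k \in Q'.
  by move=> Kx; apply/orP; rewrite -in_setU imgE img_in.
have img_pt (R : {set F k}) : R != set0 -> R \subset img K k -> exists x, K x /\ pr x k \in R.
  by case/set0Pn => b Rb /subsetP/(_ b Rb)/imgP [x [Kx eq_b]]; exists x; rewrite eq_b.
have rel_closed_at (R : {set F k}) : rel_closed K (fun x => K x /\ pr x k \in R).
  by move=> x Kx /(_ k) [y [[_ Ry] /(_ k (leqnn k)) ->]].
exists (fun x => K x /\ pr x k \in P'), (fun x => K x /\ pr x k \in Q').
split; [|split; [|split; [|split; [|split; [|split]]]]].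
- by move=> x; split => [Kx|[][]//]; case: (img_split x Kx); [left|right].
- by apply: img_pt; rewrite // -imgE subsetUl.
- by apply: img_pt; rewrite // -imgE subsetUr.
- by move=> x [[_ P'x] [_ Q'x]]; rewrite (disjointFr disPQ' P'x) in Q'x.
- exact: rel_closed_at.
- exact: rel_closed_at.
- by move=> x y [_ P'x] [_ Q'y] /(_ k); apply/negP; exact: noedge.
Qed.

Section Separation.
Hypothesis edge_alpha : forall k (a b : F k.+1), fg_edge a b -> fg_edge (alpha a) (alpha b).

(* If edges joined the projections of [P] and [Q] at every level, König's lemma on
   pairs would produce an edge from a point of [P] to a point of [Q]. *)
Lemma separated_at_level (S P Q : IL -> Prop) :
  Defs.closed S -> (forall x, S x <-> P x \/ Q x) -> rel_closed S P -> rel_closed S Q ->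
  (forall x y, P x -> Q y -> ~ il_edge x y) ->
  exists k, forall a b, a \in img P k -> b \in img Q k -> ~~ fg_edge a b.
Proof.
move=> clS S_PQ clP clQ noedge; apply: contrapT => /forallNP no_level.
pose E k := [set ab : F k * F k | [&& ab.1 \in img P k, ab.2 \in img Q k & fg_edge ab.1 ab.2]].
have E_neq0 k : E k != set0.
  apply/set0Pn; apply: contrapT => /forallNP noE; apply: (no_level k) => a b Pa Qb.
  by apply/negP => e; apply: (noE (a, b)); rewrite inE /= Pa Qb e.
have E_alpha k (ab : F k.+1 * F k.+1) : ab \in E k.+1 -> (alpha ab.1, alpha ab.2) \in E k.
  case: ab => a b; rewrite !inE /= => /and3P [/imgP [x [Px <-]] /imgP [y [Qy <-]] e].
  have := edge_alpha e; rewrite (proj2_sig x k) (proj2_sig y k) => ->.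
  by rewrite !img_in.
have [z [z_thread z_in]] := koenig E_neq0 E_alpha.
have x_thread k : alpha (z k.+1).1 = (z k).1 by rewrite -(z_thread k).
have y_thread k : alpha (z k.+1).2 = (z k).2 by rewrite -(z_thread k).
pose x : IL := exist _ (fun k => (z k).1) x_thread.
pose y : IL := exist _ (fun k => (z k).2) y_thread.
have z_E k : [&& pr x k \in img P k, pr y k \in img Q k & fg_edge (pr x k) (pr y k)].
  by have := z_in k; rewrite inE.
have closure_S (R : IL -> Prop) w : (forall v, R v -> S v) -> Defs.closure R w -> S w.
  move=> RS clRw; apply: clS => m; have [v [Rv near_v]] := clRw m.
  by exists v; split; first exact: RS.
have Px : P x.
  have clPx : Defs.closure P x by apply: closure_img => k; case/and3P: (z_E k).
  by apply: (clP _ _ clPx); apply: (closure_S P) clPx => v Pv; apply/S_PQ; left.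
have Qy : Q y.
  have clQy : Defs.closure Q y by apply: closure_img => k; case/and3P: (z_E k).
  by apply: (clQ _ _ clQy); apply: (closure_S Q) clQy => v Qv; apply/S_PQ; right.
by apply: (noedge x y Px Qy) => k; case/and3P: (z_E k).
Qed.

Lemma connected_threads D :
  onto_chain D -> (forall k, fconnected (D k)) -> connected (threads D).
Proof.
move=> ontoD connD [P [Q [PQ_D [[p Pp] [[q Qq] [_ [clP [clQ noedge]]]]]]]].
have [k sep] := separated_at_level (@closed_threads D) PQ_D clP clQ noedge.
apply: (connD k); exists (img P k), (img Q k); split.
- have PD x : P x -> threads D x by move=> Px; apply/PQ_D; left.
  have QD x : Q x -> threads D x by move=> Qx; apply/PQ_D; right.
  apply/eqP; rewrite eqEsubset subUset (img_sub _ PD) (img_sub _ QD) /=.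
  apply/subsetP => a Da; have [x [Dx <-]] := thread_through ontoD Da.
  by rewrite inE; case/PQ_D: Dx => [Px|Qx]; apply/orP; [left|right]; exact: img_in.
- by apply/set0Pn; exists (pr p k); exact: img_in.
- by apply/set0Pn; exists (pr q k); exact: img_in.
- apply/pred0P => a /=; apply/negP => /andP [Pa Qa].
  by have := sep a a Pa Qa; rewrite fg_refl.
- exact: sep.
Qed.
End Separation.

Definition agree_len n (x y : IL) : nat := find (fun k => pr x k != pr y k) (iota 0 n).

Lemma agree_len_eq n (x y : IL) k : k < agree_len n x y -> pr x k = pr y k.
Proof.
move=> lt_k; have lt_kn : k < n.
  by apply: leq_trans lt_k _; rewrite -[leqRHS](size_iota 0 n) find_size.
by have := before_find 0 lt_k; rewrite nth_iota // add0n => /negbFE/eqP.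
Qed.

Lemma near_lt_agree_len n (x y : IL) M : M < n -> near M x y -> M < agree_len n x y.
Proof.
move=> lt_Mn near_M; rewrite ltnNge; apply/negP => le_len.
have lt_len : agree_len n x y < n by apply: leq_ltn_trans le_len lt_Mn.
have differ : has (fun k => pr x k != pr y k) (iota 0 n) by rewrite has_find size_iota.
by have := nth_find 0 differ; rewrite nth_iota // add0n near_M // eqxx.
Qed.

Lemma near_threads_img D (K : IL -> Prop) M : onto_chain D -> D M = img K M ->
  (forall x, threads D x -> exists y, K y /\ near M x y) /\
  (forall y, K y -> exists x, threads D x /\ near M x y).
Proof.
move=> ontoD DM; split => [x /(_ M)|y Ky].
  by rewrite DM => /imgP [y [Ky eq_M]]; exists y; split; last exact: near_of_eq.
have : pr y M \in D M by rewrite DM img_in.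
by case/(thread_through ontoD) => x [Dx eq_M]; exists x; split; last exact: near_of_eq.
Qed.

Section Branch.
Variables (D : forall k, {set F k}) (L : nat) (pt : IL).
Hypotheses (ontoD : onto_chain D) (connD : forall k, fconnected (D k)).
Hypotheses (pt_D : forall k, k < L -> pr pt k \in D k) (connF0 : fconnected [set: F 0]).
Hypothesis confl : forall k, confluent (@alpha k).

Fixpoint branch k : {set F k} :=
  match k with
  | 0 => if 0 < L then D 0 else setT
  | k'.+1 => if k'.+1 < L then D k'.+1
             else component_of ((@alpha k') @^-1: branch k') (pr pt k'.+1)
  end.

Lemma branch_lt k : k < L -> branch k = D k.
Proof. by case: k => [|k] /= ->. Qed.

Lemma pt_branch k : pr pt k \in branch k.
Proof.
elim: k => [|k IH] /=; case: ifP => [/pt_D //|_]; first exact: in_setT.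
by apply: (component_ofP _).2; rewrite inE (proj2_sig pt k).
Qed.

Lemma connected_branch k : fconnected (branch k).
Proof.
case: k => [|k] /=; case: ifP => _; [exact: connD | exact: connF0 | exact: connD |].
have pt_pre : pr pt k.+1 \in (@alpha k) @^-1: branch k by rewrite inE (proj2_sig pt k) pt_branch.
by case: (component_ofP pt_pre) => [[_ conn _] _].
Qed.

Lemma onto_chain_branch : onto_chain branch.
Proof.
move=> k /=; case: ifP => [lt_kL|_]; first by rewrite branch_lt ?ontoD // ltnW.
apply: (confl k).2; first exact: connected_branch.
by apply: (component_ofP _).1; rewrite inE (proj2_sig pt k) pt_branch.
Qed.
End Branch.
End InverseLimit.

Unset Implicit Arguments.

Theorem proposition6p5
  (G : finite_graph -> Prop) (Fix : forall A B : finite_graph, (A -> B) -> Prop)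
  (F : nat -> finite_graph) (alpha : forall n, F n.+1 -> F n) :
  proj_fraisse_family G Fix ->
  (forall A : finite_graph, G A -> fconnected [set: A]) ->
  (forall (A B : finite_graph) (f : A -> B), G A -> G B -> Fix A B f -> confluent f) ->
  is_proj_fraisse_limit alpha G Fix ->
  kelley alpha.
Proof.
move=> _ connG Fix_confl [GF [Fix_alpha _]].
have confl k : confluent (alpha k) := Fix_confl _ _ _ (GF k.+1) (GF k) (Fix_alpha k).
have edge_alpha k := (confl k).1.1.
split.
  have -> : (fun=> True) = @threads F alpha (fun k => [set: F k]).
    by apply/funext => x; apply/propext; split => // _ k; exact: in_setT.
  apply: connected_threads => // [k|k]; last exact: connG.
  by apply/setP => b; rewrite !inE; have [a <-] := (confl k).1.2.1 b; exact: imset_f.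
move=> K p ps _ connK Kp ps_p.
pose D n := branch (img K) (agree_len n (ps n) p) (ps n).
have pt_img n k : k < agree_len n (ps n) p -> proj1_sig (ps n) k \in img K k.
  by move/agree_len_eq ->; exact: img_in Kp.
have conn_img k : fconnected (img K k) := @connected_img _ _ K k connK.
have conn0 := connG _ (GF 0).
have onto_D n := onto_chain_branch (onto_chain_img K) conn_img (pt_img n) conn0 confl.
exists (fun n => threads (D n)); split; [|split; [|split]].
- move=> n; exact: closed_threads.
- move=> n; apply: (connected_threads edge_alpha (onto_D n)) => k.
  exact: connected_branch conn_img (pt_img n) conn0 k.
- move=> n k; exact: pt_branch (pt_img n) k.
- move=> M; have [N near_N] := ps_p M; exists (maxn N M.+1) => n.
  rewrite geq_max => /andP [le_Nn lt_Mn]; apply: near_threads_img (onto_D n) _.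
  by apply: branch_lt; exact: near_lt_agree_len (near_N n le_Nn).
Qed.
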